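(* Let $d\ge1$, $z\ge0$, let $0<\varphi_1\le\cdots\le\varphi_d$ and let $\tilde v_1,\ldots,\tilde v_d\in\mathbb C$ be nonzero. For $\lambda>0$ with $\lambda\notin\{\varphi_1,\dots,\varphi_d\}$ define $$f(\lambda)=\lambda^2\sum_{m=1}^d\frac{\varphi_m|\tilde v_m|^2}{(\lambda-\varphi_m)^2}-\lambda+z,\qquad g(\lambda)=1-\sum_{m=1}^d\frac{\varphi_m|\tilde v_m|^2}{\lambda-\varphi_m}-\frac{z}{\lambda}-\log\lambda.$$ If $f$ has roots $0<\lambda_1\le\lambda_2$ both lying in an interval $(\varphi_{L-1},\varphi_L)$ for some $L$, then $g(\lambda_1)\ge g(\lambda_2)$.
   Context: Standing assumption of the paper for this lemma: all indices belong to the support $\mathcal S=\{m:\varphi_m|\tilde v_m|^2\ne0\}$, i.e. $\mathcal S=\{1,\ldots,d\}$. Here $\varphi_m$ are the eigenvalues of a Hermitian positive semi-definite matrix and $\tilde v_m$ the coordinates of a vector in its eigenbasis; $g(\lambda)$ is the value of the objective $\mathbf y^{\mathsf H}\mathbf y-\log((\mathbf y+\mathbf v)^{\mathsf H}\mathbf U(\mathbf y+\mathbf v)+z)$ at the stationary point associated with a root $\lambda$ of $f$ (this interpretation is not needed for the statement). *)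

From Stdlib Require Import Reals List.
From Coquelicot Require Import Coquelicot.
Import ListNotations.
Open Scope R_scope.

Definition sum1d (d : nat) (F : nat -> R) : R :=
  fold_right Rplus 0 (map F (seq 1 d)).

Definition f_fun (d : nat) (phi : nat -> R) (v : nat -> C) (z lam : R) : R :=
  lam ^ 2 * sum1d d (fun m => phi m * (Cmod (v m)) ^ 2 / (lam - phi m) ^ 2)
  - lam + z.

Definition g_fun (d : nat) (phi : nat -> R) (v : nat -> C) (z lam : R) : R :=
  1 - sum1d d (fun m => phi m * (Cmod (v m)) ^ 2 / (lam - phi m))
  - z / lam - ln lam.

(* Writing f(x) = x k(x) with
     k(x) = sum_m phi_m |v_m|^2 x / (x - phi_m)^2 + z / x - 1,
   one finds g'(x) = k(x) / x.  On an interval free of the poles phi_m each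
   term x / (x - phi_m)^2 and z / x is convex, so k is convex there; since k
   vanishes at lam1 and lam2 it is nonpositive in between, hence g is
   nonincreasing on [lam1, lam2]. *)
From Stdlib Require Import Reals Lra Psatz List Lia.
From Coquelicot Require Import Coquelicot.
Open Scope R_scope.

Definition sumR (l : list nat) (F : nat -> R) : R := fold_right Rplus 0 (map F l).

Lemma sumR_mull (c : R) (l : list nat) (F : nat -> R) :
  c * sumR l F = sumR l (fun m => c * F m).
Proof. induction l as [|m l IH]; unfold sumR in *; simpl; [ring | rewrite <- IH; ring]. Qed.

Lemma sumR_ext (l : list nat) (F G : nat -> R) :
  (forall m, In m l -> F m = G m) -> sumR l F = sumR l G.
Proof.
  induction l as [|m l IH]; intros HFG; unfold sumR in *; simpl; [reflexivity|].
  rewrite HFG by now left. rewrite IH; [reflexivity|]. intros; apply HFG; now right.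
Qed.

Lemma is_derive_sumR (l : list nat) (F : nat -> R -> R) (F' : nat -> R) (x : R) :
  (forall m, In m l -> is_derive (F m) x (F' m)) ->
  is_derive (fun y => sumR l (fun m => F m y)) x (sumR l F').
Proof.
  induction l as [|m l IH]; intros HF; unfold sumR in *; simpl.
  - apply (is_derive_const (K := R_AbsRing) (V := R_NormedModule) 0).
  - apply (is_derive_plus (F m) (fun y => fold_right Rplus 0 (map (fun m => F m y) l))).
    + apply HF; now left.
    + apply IH; intros; apply HF; now right.
Qed.

Definition below_chord (F : R -> R) (a b : R) : Prop :=
  forall x, a <= x <= b -> (b - a) * F x <= (b - x) * F a + (x - a) * F b.

Lemma below_chord_scale (c : R) (F : R -> R) (a b : R) :
  0 <= c -> below_chord F a b -> below_chord (fun x => c * F x) a b.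
Proof. intros Hc HF x Hx. specialize (HF x Hx). nra. Qed.

Lemma below_chord_sumR (l : list nat) (F : nat -> R -> R) (a b : R) :
  (forall m, In m l -> below_chord (F m) a b) ->
  below_chord (fun x => sumR l (fun m => F m x)) a b.
Proof.
  induction l as [|m l IH]; intros HF x Hx; unfold sumR in *; simpl; [lra|].
  assert (Hm := HF m (or_introl eq_refl) x Hx).
  assert (Hl := IH (fun n Hn => HF n (or_intror Hn)) x Hx).
  simpl in Hl. lra.
Qed.

Lemma below_chord_inv (z a b : R) :
  0 <= z -> 0 < a -> below_chord (fun x => z / x) a b.
Proof.
  intros Hz Ha x Hx.
  assert (Hgap : (b - x) * (z / a) + (x - a) * (z / b) - (b - a) * (z / x)
                 = z * ((x - a) * (b - x) * (b - a)) / (a * x * b))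
    by (field; lra).
  assert (0 <= z * ((x - a) * (b - x) * (b - a)) / (a * x * b)).
  { apply Rdiv_le_0_compat.
    - apply Rmult_le_pos; [lra|]. apply Rmult_le_pos; [apply Rmult_le_pos|]; lra.
    - apply Rmult_lt_0_compat; [apply Rmult_lt_0_compat|]; lra. }
  lra.
Qed.

(* Neither 1/(x - p) nor p/(x - p)^2 alone is convex for x < p; the chord gap
   of their sum x/(x - p)^2 factors with the numerator
   a (x - p)(b - p) + p (a - p)((x - p) + (b - p)), positive because
   a - p, x - p, b - p all have the same sign. *)
Lemma below_chord_pole (p a b : R) :
  0 < p -> 0 < a -> p < a \/ b < p ->
  below_chord (fun x => x / (x - p) ^ 2) a b.
Proof.
  intros Hp Ha Hsep x Hx.
  assert (Hsame : 0 < (x - p) * (b - p) /\ 0 < (a - p) * ((x - p) + (b - p)))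
    by (destruct Hsep; split; nra).
  assert (Hnum : 0 <= a * ((x - p) * (b - p)) + p * ((a - p) * ((x - p) + (b - p))))
    by nra.
  assert (Hgap : (b - x) * (a / (a - p) ^ 2) + (x - a) * (b / (b - p) ^ 2)
                 - (b - a) * (x / (x - p) ^ 2)
               = (x - a) * (b - x) * (b - a)
                 * (a * ((x - p) * (b - p)) + p * ((a - p) * ((x - p) + (b - p))))
                 / ((a - p) * (x - p) * (b - p)) ^ 2)
    by (field; repeat split; lra).
  assert (0 <= (x - a) * (b - x) * (b - a)
                 * (a * ((x - p) * (b - p)) + p * ((a - p) * ((x - p) + (b - p))))
                 / ((a - p) * (x - p) * (b - p)) ^ 2).
  { apply Rdiv_le_0_compat.
    - apply Rmult_le_pos; [|exact Hnum].
      apply Rmult_le_pos; [apply Rmult_le_pos|]; lra.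
    - apply pow2_gt_0. repeat apply Rmult_integral_contrapositive_currified; lra. }
  lra.
Qed.

Lemma below_chord_nonpos (F : R -> R) (a b x : R) :
  below_chord F a b -> F a = 0 -> F b = 0 -> a <= x <= b -> F x <= 0.
Proof.
  intros HF Ha Hb Hx.
  destruct (Req_dec x a) as [->|Hxa]; [lra|].
  specialize (HF x Hx). rewrite Ha, Hb in HF. nra.
Qed.

Lemma is_derive_nonpos_ge (F F' : R -> R) (a b : R) :
  a <= b ->
  (forall x, a <= x <= b -> is_derive F x (F' x)) ->
  (forall x, a <= x <= b -> F' x <= 0) ->
  F a >= F b.
Proof.
  intros Hab HF HF'.
  destruct (MVT_gen F a b F') as [c [Hc Hmvt]];
    rewrite ?Rmin_left, ?Rmax_right in * by lra.
  - intros x Hx. apply HF; lra.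
  - intros x Hx. apply derivable_continuous_pt.
    exists (F' x). apply is_derive_Reals, HF; lra.
  - specialize (HF' c Hc). nra.
Qed.

Lemma nondecreasing_of_succ (d : nat) (phi : nat -> R) :
  (forall m, (1 <= m)%nat -> (m < d)%nat -> phi m <= phi (S m)) ->
  forall m n, (1 <= m)%nat -> (m <= n)%nat -> (n <= d)%nat -> phi m <= phi n.
Proof.
  intros Hsucc m n Hm Hmn Hn. induction n as [|n IH]; [lia|].
  destruct (Nat.eq_dec m (S n)) as [->|Hne]; [lra|].
  apply Rle_trans with (phi n); [apply IH; lia | apply Hsucc; lia].
Qed.

Lemma outside_gap (d L : nat) (phi : nat -> R) (lo hi : R) :
  (forall m n, (1 <= m)%nat -> (m <= n)%nat -> (n <= d)%nat -> phi m <= phi n) ->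
  (1 <= L)%nat -> (L <= S d)%nat ->
  (L = 1%nat \/ phi (pred L) < lo) -> (L = S d \/ hi < phi L) ->
  forall m, In m (seq 1 d) -> phi m < lo \/ hi < phi m.
Proof.
  intros Hmono HL1 HLd Hlo Hhi m Hm. apply in_seq in Hm.
  destruct (Compare_dec.le_lt_dec m (pred L)).
  - left. destruct Hlo as [Hlo|Hlo]; [lia|].
    apply Rle_lt_trans with (phi (pred L)); [apply Hmono; lia | exact Hlo].
  - right. destruct Hhi as [Hhi|Hhi]; [lia|].
    apply Rlt_le_trans with (phi L); [exact Hhi | apply Hmono; lia].
Qed.

Section Secular.

Variables (d : nat) (z : R) (phi : nat -> R) (v : nat -> C).

Let w (m : nat) : R := phi m * Cmod (v m) ^ 2.

Definition k_fun (x : R) : R :=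
  sumR (seq 1 d) (fun m => w m * (x / (x - phi m) ^ 2)) + z / x - 1.

Lemma sumR_weights_over_square (x : R) :
  sumR (seq 1 d) (fun m => w m * (x / (x - phi m) ^ 2))
  = x * sum1d d (fun m => w m / (x - phi m) ^ 2).
Proof.
  unfold sum1d. fold (sumR (seq 1 d) (fun m => w m / (x - phi m) ^ 2)).
  rewrite sumR_mull. apply sumR_ext. intros m _. unfold Rdiv. ring.
Qed.

Lemma f_fun_k_fun (x : R) : x <> 0 -> f_fun d phi v z x = x * k_fun x.
Proof.
  intros Hx. unfold f_fun, k_fun. rewrite sumR_weights_over_square.
  unfold w. field. exact Hx.
Qed.

Lemma k_fun_root (x : R) : 0 < x -> f_fun d phi v z x = 0 -> k_fun x = 0.
Proof.
  intros Hx Hf. rewrite f_fun_k_fun in Hf by lra.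
  destruct (Rmult_integral _ _ Hf); lra.
Qed.

Lemma is_derive_g_fun (x : R) :
  0 < x -> (forall m, In m (seq 1 d) -> x <> phi m) ->
  is_derive (g_fun d phi v z) x (k_fun x / x).
Proof.
  intros Hx Hpoles.
  assert (Hsum : is_derive (fun y => sumR (seq 1 d) (fun m => w m / (y - phi m))) x
                   (sumR (seq 1 d) (fun m => -1 * (w m / (x - phi m) ^ 2)))).
  { apply (is_derive_sumR _ (fun m y => w m / (y - phi m))).
    intros m Hm. specialize (Hpoles m Hm).
    auto_derive; [lra | field; lra]. }
  assert (Hrest : is_derive (fun y => 1 - z / y - ln y) x (z / x ^ 2 - 1 / x))
    by (auto_derive; [lra | field; lra]).
  rewrite <- sumR_mull in Hsum.
  apply (is_derive_ext (fun y => (1 - z / y - ln y)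
                                 - sumR (seq 1 d) (fun m => w m / (y - phi m)))).
  { intros y. unfold g_fun, sum1d, sumR, w. lra. }
  replace (k_fun x / x)
    with (z / x ^ 2 - 1 / x - -1 * sum1d d (fun m => w m / (x - phi m) ^ 2)).
  - apply (is_derive_minus _ _ x _ _ Hrest Hsum).
  - unfold k_fun. rewrite sumR_weights_over_square. field. lra.
Qed.

Lemma below_chord_k_fun (a b : R) :
  0 <= z -> 0 < a ->
  (forall m, In m (seq 1 d) -> 0 < phi m /\ (phi m < a \/ b < phi m)) ->
  below_chord k_fun a b.
Proof.
  intros Hz Ha Hphi x Hx.
  assert (Hsum := below_chord_sumR (seq 1 d)
                    (fun m y => w m * (y / (y - phi m) ^ 2)) a b).
  assert (Hinv := below_chord_inv z a b Hz Ha x Hx).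
  unfold k_fun.
  enough ((b - a) * sumR (seq 1 d) (fun m => w m * (x / (x - phi m) ^ 2))
          <= (b - x) * sumR (seq 1 d) (fun m => w m * (a / (a - phi m) ^ 2))
             + (x - a) * sumR (seq 1 d) (fun m => w m * (b / (b - phi m) ^ 2)))
    by lra.
  apply Hsum; [|exact Hx].
  intros m Hm. destruct (Hphi m Hm) as [Hpos Hsep].
  apply below_chord_scale; [|now apply below_chord_pole].
  unfold w. apply Rmult_le_pos; [lra | apply pow2_ge_0].
Qed.

End Secular.

Theorem lemma4 (d : nat) (z : R) (phi : nat -> R) (v : nat -> C)
  (lam1 lam2 : R) :
  (1 <= d)%nat ->
  0 <= z ->
  0 < phi 1%nat ->
  (forall m : nat, (1 <= m)%nat -> (m < d)%nat -> phi m <= phi (S m)) ->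
  (forall m : nat, (1 <= m)%nat -> (m <= d)%nat -> v m <> 0%C) ->
  0 < lam1 -> lam1 <= lam2 ->
  f_fun d phi v z lam1 = 0 ->
  f_fun d phi v z lam2 = 0 ->
  (exists L : nat, (1 <= L)%nat /\ (L <= S d)%nat /\
     (L = 1%nat \/ phi (pred L) < lam1) /\
     (L = S d \/ lam2 < phi L)) ->
  g_fun d phi v z lam1 >= g_fun d phi v z lam2.
Proof.
  (* Only the nonnegativity of the weights phi_m |v_m|^2 matters. *)
  intros _ Hz Hphi1 Hsucc _ Hlam1 Hlam12 Hf1 Hf2 [L [HL1 [HLd [Hlo Hhi]]]].
  assert (Hmono := nondecreasing_of_succ d phi Hsucc).
  assert (Hphi : forall m, In m (seq 1 d) ->
                   0 < phi m /\ (phi m < lam1 \/ lam2 < phi m)).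
  { intros m Hm. split.
    - apply in_seq in Hm. apply Rlt_le_trans with (phi 1%nat); [exact Hphi1|].
      apply Hmono; lia.
    - exact (outside_gap d L phi lam1 lam2 Hmono HL1 HLd Hlo Hhi m Hm). }
  assert (Hk : forall x, lam1 <= x <= lam2 -> k_fun d z phi v x <= 0).
  { intros x Hx. apply (below_chord_nonpos _ lam1 lam2); [| | |exact Hx].
    - now apply below_chord_k_fun.
    - now apply k_fun_root.
    - apply k_fun_root; [lra | exact Hf2]. }
  apply (is_derive_nonpos_ge _ (fun x => k_fun d z phi v x / x)); [exact Hlam12 | |].
  - intros x Hx. apply is_derive_g_fun; [lra|].
    intros m Hm. destruct (Hphi m Hm) as [_ [Hm'|Hm']]; lra.
  - intros x Hx. specialize (Hk x Hx).
    assert (0 < / x) by (apply Rinv_0_lt_compat; lra).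
    unfold Rdiv. nra.
Qed.
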